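(* Let $\Omega$ be strictly convex. For a trajectory $X(s)=x+(s-t)v$, $V(s)=v$, define $$\alpha(s)=\xi^2(X(s))+[V(s)\cdot\nabla\xi(X(s))]^2-2\{V(s)\cdot\nabla^2\xi(X(s))\cdot V(s)\}\xi(X(s)).$$ Suppose $X(s)\in\bar\Omega$ for $t_1\le s\le t_2$. Then there exists a constant $C_\xi>0$ (depending only on $\xi$) such that $$e^{C_\xi(|V(t_1)|+1)t_1}\alpha(t_1)\le e^{C_\xi(|V(t_1)|+1)t_2}\alpha(t_2),\qquad e^{-C_\xi(|V(t_1)|+1)t_1}\alpha(t_1)\ge e^{-C_\xi(|V(t_1)|+1)t_2}\alpha(t_2).$$
   Context: $\Omega=\{x\in\mathbb{R}^3:\xi(x)<0\}$ is connected and bounded, $\xi$ smooth with $\nabla\xi\neq0$ on $\{\xi=0\}$. Strictly convex means: there is $c_\xi>0$ with $\partial_{ij}\xi(x)\zeta^i\zeta^j\ge c_\xi|\zeta|^2$ for all $x$ with $\xi(x)\le0$ and all $\zeta\in\mathbb{R}^3$. *)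

From HB Require Import structures.
From mathcomp Require Import all_boot all_order all_algebra.
From mathcomp Require Import all_classical all_reals all_analysis.
Set Implicit Arguments. Unset Strict Implicit. Unset Printing Implicit Defensive.
Import Order.TTheory GRing.Theory Num.Theory.
Import numFieldNormedType.Exports.
Local Open Scope classical_set_scope.
Local Open Scope ring_scope.

Section Defs.
Variable R : realType.
Notation V3 := 'rV[R]_3.

Definition e3 (i : 'I_3) : V3 := delta_mx 0 i.

Definition dot3 (u w : V3) : R := \sum_(i < 3) u 0 i * w 0 i.
Definition enorm3 (u : V3) : R := Num.sqrt (dot3 u u).

Definition dpart (i : 'I_3) (f : V3 -> R) : V3 -> R := fun x => 'D_(e3 i) f x.

Definition dparts (s : seq 'I_3) (f : V3 -> R) : V3 -> R := foldr dpart f s.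

Definition smooth3 (f : V3 -> R) : Prop :=
  forall (s : seq 'I_3) (x : V3), differentiable (dparts s f) x.

Definition grad3 (f : V3 -> R) (x : V3) : V3 := \row_i dpart i f x.
Definition hess3 (f : V3 -> R) (x : V3) : 'M[R]_3 :=
  \matrix_(i, j) dpart i (dpart j f) x.

Definition qform3 (M : 'M[R]_3) (v : V3) : R := (v *m M *m v^T) 0 0.

Definition Omega (xi : V3 -> R) : set V3 := [set x | xi x < 0].

Definition strictly_convex_xi (xi : V3 -> R) : Prop :=
  exists c : R, 0 < c /\
    forall x : V3, xi x <= 0 -> forall z : V3,
      c * enorm3 z ^+ 2 <= qform3 (hess3 xi x) z.

Definition traj (x v : V3) (t s : R) : V3 := x + (s - t) *: v.
Definition alpha (xi : V3 -> R) (x v : V3) (t s : R) : R :=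
  let X := traj x v t s in
  xi X ^+ 2 + (dot3 v (grad3 xi X)) ^+ 2
  - 2 * qform3 (hess3 xi X) v * xi X.
End Defs.

From HB Require Import structures.
From mathcomp Require Import all_boot all_order all_algebra.
From mathcomp Require Import all_classical all_reals all_analysis.
From mathcomp Require Import ring lra.
Import Order.TTheory GRing.Theory Num.Theory.
Import numFieldNormedType.Exports.
Local Open Scope classical_set_scope.
Local Open Scope ring_scope.
Set Implicit Arguments. Unset Strict Implicit.

(* Along the line X(s), write xi', xi'', xi''' for the successive derivatives
   of s |-> xi (X s); then alpha = xi^2 + xi'^2 - 2 xi'' xi and the xi' xi''
   terms cancel in alpha' = 2 xi (xi' - xi''').  On the closure of Omega we have
   xi <= 0 and, by strict convexity, xi'' >= c |V|^2, so the term -2 xi'' xi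
   dominates |xi| |V|^2 while xi^2 + xi'^2 dominates 2 |xi| |xi'|; the third
   derivatives of xi are bounded on the compact closure, so |xi'''| <= B |V|^3.
   Altogether |alpha'| <= C (|V| + 1) alpha, and Gronwall's argument applied to
   exp(+- C (|V| + 1) s) alpha(s) gives both inequalities. *)

Lemma closure_subset_closed (T : topologicalType) (A C : set T) :
  closed C -> A `<=` C -> closure A `<=` C.
Proof. by move=> clC AC; rewrite (closure_id C).1 //; exact: closureS. Qed.

Section RealFunctions.
Variable R : realType.

Lemma is_derive_ndecr (f df : R -> R) (t1 t2 : R) :
  (forall s : R, is_derive s 1 f (df s)) -> t1 <= t2 ->
  (forall s, t1 <= s <= t2 -> 0 <= df s) -> f t1 <= f t2.
Proof.
move=> fdf t12 df_ge0; rewrite -subr_ge0.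
have [|s s_in ->] := MVT_segment t12 (fun s _ => fdf s).
  by apply: derivable_within_continuous => s _; exact: ex_derive.
rewrite mulr_ge0 ?subr_ge0 //.
by apply: df_ge0; move: s_in; rewrite in_itv.
Qed.

Lemma is_derive_expRM (K : R) (f : R -> R) (df s : R) : is_derive s 1 f df ->
  is_derive s 1 (fun s => expR (K * s) * f s) (expR (K * s) * (df + K * f s)).
Proof.
move=> fdf; have -> : (fun s => expR (K * s) * f s) = (expR \o ( *%R K)) * f by [].
by apply: is_derive_eq; rewrite /GRing.scale /=; ring.
Qed.

Lemma gronwall_two_sided (f df : R -> R) (K t1 t2 : R) :
  (forall s : R, is_derive s 1 f (df s)) -> t1 <= t2 ->
  (forall s, t1 <= s <= t2 -> `|df s| <= K * f s) ->
  expR (K * t1) * f t1 <= expR (K * t2) * f t2 /\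
  expR (- K * t1) * f t1 >= expR (- K * t2) * f t2.
Proof.
move=> fdf t12 dfK; split.
  apply: (is_derive_ndecr (fun s => is_derive_expRM K (fdf s))) => // s s_in.
  rewrite mulr_ge0 ?expR_ge0 //.
  by have := dfK s s_in; rewrite ler_norml => /andP[]; lra.
rewrite -lerN2.
have dfN s := is_deriveN (is_derive_expRM (- K) (fdf s)).
apply: (is_derive_ndecr dfN) => // s s_in.
rewrite oppr_ge0 mulr_ge0_le0 ?expR_ge0 //.
by have := dfK s s_in; rewrite ler_norml => /andP[]; lra.
Qed.

Lemma is_derive_sum_fun n (f : 'I_n -> R -> R) (df : 'I_n -> R) (s : R) :
  (forall i, is_derive s 1 (f i) (df i)) ->
  is_derive s 1 (fun s => \sum_(i < n) f i s) (\sum_(i < n) df i).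
Proof.
move=> fdf; have -> : (fun s => \sum_(i < n) f i s) = \sum_(i < n) f i.
  by apply/funext => r; rewrite fct_sumE.
exact: is_derive_sum.
Qed.

End RealFunctions.

Section DerivativesAlongLines.
Variable R : realType.
Notation V3 := 'rV[R]_3.

Lemma derive_sum_dpart (F : V3 -> R) (y v : V3) : differentiable F y ->
  'D_v F y = \sum_(i < 3) v 0 i * dpart i F y.
Proof.
move=> dF; rewrite deriveE // {1}(row_sum_delta v) linear_sum.
by apply: eq_bigr => i _; rewrite linearZ /dpart deriveE.
Qed.

Lemma is_derive_traj (F : V3 -> R) (x v : V3) (t s : R) :
  differentiable F (traj x v t s) ->
  is_derive s 1 (fun s => F (traj x v t s))
    (\sum_(i < 3) v 0 i * dpart i F (traj x v t s)).
Proof.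
move=> dF; rewrite -derive_sum_dpart //.
have line_quot :
    (fun h : R => h^-1 *: (((fun s => F (traj x v t s)) \o shift s) (h *: 1)
                           - F (traj x v t s)))
    = (fun h : R => h^-1 *: ((F \o shift (traj x v t s)) (h *: v)
                           - F (traj x v t s))).
  apply/funext => h /=; congr (_ *: (F _ - _)).
  by rewrite /traj /= [h%:A]mulr1 -[h + s - t]addrA scalerDl addrCA.
have dFv : derivable F (traj x v t s) v by exact: diff_derivable.
by apply: DeriveDef; rewrite ?/derivable /derive line_quot.
Qed.

End DerivativesAlongLines.

Section AlphaDerivative.
Variables (R : realType) (xi : 'rV[R]_3 -> R) (x v : 'rV[R]_3) (t : R).
Hypothesis xi_smooth : smooth3 xi.

Definition xi_line (s : R) := xi (traj x v t s).
Definition dxi_line (s : R) := \sum_(i < 3) v 0 i * dpart i xi (traj x v t s).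
Definition d2xi_line (s : R) := \sum_(k < 3) \sum_(i < 3)
  (v 0 k * v 0 i) * dpart i (dpart k xi) (traj x v t s).
Definition d3xi_line (s : R) := \sum_(k < 3) \sum_(i < 3) (v 0 k * v 0 i) *
  \sum_(j < 3) v 0 j * dpart j (dpart i (dpart k xi)) (traj x v t s).

Lemma is_derive_xi_line (s : R) : is_derive s 1 xi_line (dxi_line s).
Proof. exact: is_derive_traj (xi_smooth [::] _). Qed.

Lemma is_derive_dxi_line (s : R) : is_derive s 1 dxi_line (d2xi_line s).
Proof.
apply: is_derive_eq.
  apply: is_derive_sum_fun => i; apply: is_deriveZ.
  exact: is_derive_traj (xi_smooth [:: i] _).
rewrite /d2xi_line; apply: eq_bigr => k _; rewrite /GRing.scale /= big_distrr.
by apply: eq_bigr => i _; rewrite /= mulrA.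
Qed.

Lemma is_derive_d2xi_line (s : R) : is_derive s 1 d2xi_line (d3xi_line s).
Proof.
apply: is_derive_sum_fun => k; apply: is_derive_sum_fun => i; apply: is_deriveZ.
exact: is_derive_traj (xi_smooth [:: i; k] _).
Qed.

Lemma dxi_lineE (s : R) : dxi_line s = dot3 v (grad3 xi (traj x v t s)).
Proof. by apply: eq_bigr => i _; rewrite mxE. Qed.

Lemma d2xi_lineE (s : R) : d2xi_line s = qform3 (hess3 xi (traj x v t s)) v.
Proof.
rewrite /qform3 /d2xi_line !mxE; apply: eq_bigr => k _; rewrite !mxE big_distrl /=.
by apply: eq_bigr => i _; rewrite !mxE; ring.
Qed.

Lemma alpha_lineE (s : R) :
  alpha xi x v t s = xi_line s ^+ 2 + dxi_line s ^+ 2 - 2 * d2xi_line s * xi_line s.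
Proof. by rewrite /alpha dxi_lineE d2xi_lineE. Qed.

Lemma is_derive_alpha (s : R) : is_derive s 1 (alpha xi x v t)
  (2 * xi_line s * (dxi_line s - d3xi_line s)).
Proof.
have -> : alpha xi x v t =
    xi_line * xi_line + dxi_line * dxi_line - 2 \*: (d2xi_line * xi_line).
  apply/funext => r; rewrite alpha_lineE.
  have -> : (xi_line * xi_line + dxi_line * dxi_line
             - 2 \*: (d2xi_line * xi_line)) r =
            xi_line r * xi_line r + dxi_line r * dxi_line r
             - 2 * (d2xi_line r * xi_line r) by [].
  ring.
have dxi := is_derive_xi_line s; have d2xi := is_derive_dxi_line s.
have d3xi := is_derive_d2xi_line s.
apply: (is_derive_eq (is_deriveB (is_deriveD (is_deriveM dxi dxi)
  (is_deriveM d2xi d2xi)) (is_deriveZ 2 (is_deriveM d3xi dxi)))).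
rewrite /GRing.scale /=; ring.
Qed.

End AlphaDerivative.

Section Estimates.
Variable R : realType.
Notation V3 := 'rV[R]_3.

(* [a], [b], [q], [g] stand for xi, xi', xi'' and xi''' along the line, and
   [N] for |V|. *)
Lemma alpha_slope_le (a b q g c B N : R) : a <= 0 -> 0 < c -> 0 <= B -> 0 <= N ->
  c * N ^+ 2 <= q -> `|g| <= B * N ^+ 3 ->
  `|2 * a * (b - g)| <= ((1 + B / c) * (N + 1)) * (a ^+ 2 + b ^+ 2 - 2 * q * a).
Proof.
move=> a_le0 c_gt0 B_ge0 N_ge0 qN gB.
set D := B / c; set u := - a.
have D_ge0 : 0 <= D by rewrite divr_ge0 // ltW.
have u_ge0 : 0 <= u by rewrite oppr_ge0.
have -> : a = - u by rewrite opprK.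
have q_ge0 : 0 <= q.
  by apply: le_trans qN; exact: mulr_ge0 (ltW c_gt0) (exprn_ge0 2 N_ge0).
have split_g : `|2 * - u * (b - g)| <= 2 * u * `|b| + 2 * u * `|g|.
  rewrite !normrM normrN normr_nat (ger0_norm u_ge0) -mulrDr.
  by rewrite ler_wpM2l ?mulr_ge0 // ler_normB.
have amgm : 2 * u * `|b| <= u ^+ 2 + b ^+ 2.
  rewrite -[b ^+ 2]real_normK ?num_real //.
  by have := sqr_ge0 (u - `|b|); rewrite sqrrB; lra.
have third : 2 * u * `|g| <= D * N * (2 * q * u).
  apply: le_trans (_ : 2 * u * (B * N ^+ 3) <= _).
    by rewrite ler_wpM2l ?mulr_ge0.
  rewrite -[B](divfK (lt0r_neq0 c_gt0)) -/D.
  have := ler_wpM2l (mulr_ge0 (mulr_ge0 D_ge0 N_ge0) (mulr_ge0 (ler0n _ 2) u_ge0)) qN.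
  by rewrite !exprS expr0; nra.
set K := (1 + D) * (N + 1).
have K_ge1 : 1 <= K by rewrite /K; nra.
have K_geDN : D * N <= K by rewrite /K; nra.
have := ler_wpM2r (mulr_ge0 (mulr_ge0 (ler0n _ 2) q_ge0) u_ge0) K_geDN.
have := ler_peMl (addr_ge0 (sqr_ge0 u) (sqr_ge0 b)) K_ge1.
have -> : (- u) ^+ 2 + b ^+ 2 - 2 * q * - u = (u ^+ 2 + b ^+ 2) + 2 * q * u by ring.
rewrite [K * _]mulrDr; lra.
Qed.

Lemma sum3_norm_le (F : 'I_3 -> R) (b : R) : (forall i, `|F i| <= b) ->
  `|\sum_(i < 3) F i| <= 3 * b.
Proof.
move=> Fb; apply: le_trans (ler_norm_sum _ _ _) _.
apply: le_trans (_ : \sum_(i < 3) b <= _); first by apply: ler_sum => i _.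
by rewrite sumr_const card_ord mulr_natl.
Qed.

Lemma enorm3_ge0 (v : V3) : 0 <= enorm3 v.
Proof. exact: sqrtr_ge0. Qed.

Lemma norm_coord_le_enorm3 (v : V3) (i : 'I_3) : `|v 0 i| <= enorm3 v.
Proof.
rewrite /enorm3 /dot3 -sqrtr_sqr; apply: ler_wsqrtr.
rewrite (bigD1 i) //= -expr2 lerDl; apply: sumr_ge0 => j _.
by rewrite -expr2 sqr_ge0.
Qed.

Lemma mx_norm_le_enorm3 (v : V3) : `|v| <= enorm3 v.
Proof.
rewrite [leLHS]/Num.norm /= mx_normrE; apply: bigmax_le; first exact: enorm3_ge0.
by move=> [i j] _ /=; rewrite ord1; exact: norm_coord_le_enorm3.
Qed.

Lemma d3xi_line_le (xi : V3 -> R) (x v : V3) (t s B : R) : 0 <= B ->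
  (forall i j k : 'I_3, `|dpart j (dpart i (dpart k xi)) (traj x v t s)| <= B) ->
  `|d3xi_line xi x v t s| <= 27 * B * enorm3 v ^+ 3.
Proof.
move=> B_ge0 dB; set N := enorm3 v.
have vN := norm_coord_le_enorm3 v.
have -> : 27 * B * N ^+ 3 = 3 * (3 * (N * N * (3 * (N * B)))) by ring.
apply: sum3_norm_le => k; apply: sum3_norm_le => i.
rewrite normrM; apply: ler_pM; rewrite ?normr_ge0 //.
  by rewrite normrM; apply: ler_pM; rewrite ?normr_ge0.
apply: sum3_norm_le => j; rewrite normrM; apply: ler_pM; rewrite ?normr_ge0 //.
Qed.

End Estimates.

Lemma continuous_compact_norm_bounded (R : realType) (T : topologicalType)
    (f : T -> R) (A : set T) :
  continuous f -> compact A -> exists B, 0 <= B /\ forall y, A y -> `|f y| <= B.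
Proof.
move=> f_cont A_cpt.
have [M [_ fAM]] : bounded_set (f @` A).
  apply: compact_bounded; apply: continuous_compact => //.
  exact: continuous_subspaceT.
exists (`|M| + 1); split=> [|y Ay]; first by rewrite addr_ge0.
by apply: (fAM (`|M| + 1)); [rewrite (le_lt_trans (ler_norm M)) ?ltrDl | exists y].
Qed.

Section ClosureOfOmega.
Variables (R : realType) (xi : 'rV[R]_3 -> R).
Hypothesis xi_smooth : smooth3 xi.

Lemma closure_Omega_le0 y : closure (Omega xi) y -> xi y <= 0.
Proof.
apply: (@closure_subset_closed _ _ (xi @^-1` [set r | r <= 0])) => [|z /ltW //].
apply: preimage_closed => [z _|]; last exact: closed_le.
by apply: differentiable_continuous; exact: (xi_smooth [::] z).
Qed.

Lemma closure_Omega_compact (M : R) : (forall y, Omega xi y -> enorm3 y <= M) ->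
  compact (closure (Omega xi)).
Proof.
move=> OmegaM; apply: bounded_closed_compact; last exact: closed_closure.
exists M; split=> [|r Mr y]; first exact: num_real.
move=> /(@closure_subset_closed _ _ ((fun z => `|z|) @^-1` [set r | r <= M])) yM.
apply: le_trans (ltW Mr); apply: yM => [|z /OmegaM]; last first.
  by apply: le_trans; exact: mx_norm_le_enorm3.
by apply: preimage_closed => [z _|]; [exact: norm_continuous | exact: closed_le].
Qed.

Lemma third_partials_bounded (M : R) : (forall y, Omega xi y -> enorm3 y <= M) ->
  exists B, 0 <= B /\ forall y, closure (Omega xi) y -> forall i j k : 'I_3,
    `|dpart j (dpart i (dpart k xi)) y| <= B.
Proof.
move=> OmegaM.
have bounded_ijk (p : 'I_3 * 'I_3 * 'I_3) : exists B, 0 <= B /\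
    forall y, closure (Omega xi) y ->
      `|dpart p.1.2 (dpart p.1.1 (dpart p.2 xi)) y| <= B.
  apply: continuous_compact_norm_bounded (closure_Omega_compact OmegaM).
  by move=> z; apply: differentiable_continuous; exact: (xi_smooth [:: _; _; _] z).
have [f fB] := choice bounded_ijk.
have f_ge0 p : 0 <= f p by case: (fB p).
exists (\sum_p f p); split=> [|y y_cl i j k]; first exact: sumr_ge0.
apply: le_trans (proj2 (fB (i, j, k)) y y_cl) _.
by rewrite (bigD1 (i, j, k)) //= lerDl sumr_ge0.
Qed.

End ClosureOfOmega.

Lemma alpha_slope_le_alpha (R : realType) (xi : 'rV[R]_3 -> R) (x v : 'rV[R]_3)
    (t s c B : R) :
  0 < c -> 0 <= B -> xi (traj x v t s) <= 0 ->
  c * enorm3 v ^+ 2 <= qform3 (hess3 xi (traj x v t s)) v ->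
  (forall i j k : 'I_3, `|dpart j (dpart i (dpart k xi)) (traj x v t s)| <= B) ->
  `|2 * xi_line xi x v t s * (dxi_line xi x v t s - d3xi_line xi x v t s)|
    <= ((1 + 27 * B / c) * (enorm3 v + 1)) * alpha xi x v t s.
Proof.
move=> c_gt0 B_ge0 xi_le0 convex dB; rewrite alpha_lineE.
apply: alpha_slope_le; rewrite ?d2xi_lineE ?mulr_ge0 ?enorm3_ge0 //.
exact: d3xi_line_le.
Qed.

Theorem mainTheorem10 (R : realType) (xi : 'rV[R]_3 -> R) :
  smooth3 xi ->
  (forall x, xi x = 0 -> grad3 xi x != 0) ->
  connected (Omega xi) ->
  (exists M : R, forall x, Omega xi x -> enorm3 x <= M) ->
  strictly_convex_xi xi ->
  exists C : R, 0 < C /\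
    forall (x v : 'rV[R]_3) (t t1 t2 : R),
      t1 <= t2 ->
      (forall s, t1 <= s <= t2 -> closure (Omega xi) (traj x v t s)) ->
      expR (C * (enorm3 v + 1) * t1) * alpha xi x v t t1
        <= expR (C * (enorm3 v + 1) * t2) * alpha xi x v t t2 /\
      expR (- (C * (enorm3 v + 1)) * t1) * alpha xi x v t t1
        >= expR (- (C * (enorm3 v + 1)) * t2) * alpha xi x v t t2.
Proof.
move=> xi_smooth _ _ [M OmegaM] [c [c_gt0 convex]].
have [B [B_ge0 dB]] := third_partials_bounded xi_smooth OmegaM.
have Bc_ge0 : 0 <= 27 * B / c by rewrite divr_ge0 ?mulr_ge0 // ltW.
exists (1 + 27 * B / c); split=> [|x v t t1 t2 t12 in_cl]; first lra.
have dalpha s := is_derive_alpha x v t xi_smooth s.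
apply: (gronwall_two_sided dalpha t12) => s s_in.
have xi_le0 := closure_Omega_le0 xi_smooth (in_cl s s_in).
apply: alpha_slope_le_alpha => //; first exact: convex.
by move=> i j k; apply: dB; exact: in_cl.
Qed.
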